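(* Let $\mathbb{E}$ be a finitely complete category endowed with a fibrational class $\Sigma$ of split epimorphisms. (1) If $\mathbb{E}$ is $\Sigma$-protomodular, then it is a $\Sigma$-Mal'tsev category. (2) If in addition $\Sigma$ is point-congruous, then for every morphism $y\colon Y'\to Y$ the base-change functor $y^*\colon\Sigma_Y(\mathbb{E})\to\Sigma_{Y'}(\mathbb{E})$ (pullback along $y$) is conservative.
   Context: A split epimorphism is a pair $(f,s)$ with $fs=1$. A class $\Sigma$ of split epimorphisms is fibrational if it contains all split epimorphisms $(f,s)$ with $f$ invertible and is stable under pullback along any morphism; it is point-congruous if moreover the full subcategory $\Sigma(\mathbb{E})$ of the category $\mathrm{Pt}(\mathbb{E})$ of split epimorphisms (with commuting squares as morphisms) is closed under finite limits in $\mathrm{Pt}(\mathbb{E})$. $\Sigma_Y(\mathbb{E})$ is the category of split epimorphisms in $\Sigma$ with codomain $Y$ and morphisms commuting with the epimorphisms and the splittings. A pair of morphisms with common codomain $Z$ is jointly extremally epic if it factors jointly through no non-invertible monomorphism into $Z$. $\mathbb{E}$ is $\Sigma$-Mal'tsev if for every split epimorphism $(f,s)\colon X\rightleftarrows Y$ in $\Sigma$ and every split epimorphism $(g,t)$ with $g\colon Y'\to Y$, letting $X'=Y'\times_YX$, $s'=(1_{Y'},sg)$, $\bar t=(tf,1_X)$, the pair $(s',\bar t)$ is jointly extremally epic. A split epimorphism $(f,s)\colon X\rightleftarrows Y$ is strongly split when for every morphism $y\colon\bar Y\to Y$, with $x\colon\bar Y\times_YX\to X$ the pullback projection, the pair $(x,s)$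 is jointly extremally epic. $\mathbb{E}$ is $\Sigma$-protomodular when every split epimorphism in $\Sigma$ is strongly split. *)

From Stdlib Require Import ProofIrrelevance.

Set Implicit Arguments.

Record Category := {
  Ob :> Type;
  Hom : Ob -> Ob -> Type;
  idm : forall a : Ob, Hom a a;
  comp : forall a b c : Ob, Hom b c -> Hom a b -> Hom a c;
  comp_assoc : forall (a b c d : Ob) (h : Hom c d) (g : Hom b c) (f : Hom a b),
      comp h (comp g f) = comp (comp h g) f;
  comp_id_l : forall (a b : Ob) (f : Hom a b), comp (idm b) f = f;
  comp_id_r : forall (a b : Ob) (f : Hom a b), comp f (idm a) = f
}.

Arguments Hom {c} a b : rename.
Arguments idm {c} a : rename.
Arguments comp {c a b c0} g f : rename.

Infix "∘" := comp (at level 40, left associativity).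

Definition mono {C : Category} {a b : C} (m : Hom a b) : Prop :=
  forall (z : C) (g h : Hom z a), m ∘ g = m ∘ h -> g = h.

Definition iso {C : Category} {a b : C} (f : Hom a b) : Prop :=
  exists g : Hom b a, g ∘ f = idm a /\ f ∘ g = idm b.

Definition is_terminal {C : Category} (T : C) : Prop :=
  forall A : C, exists! h : Hom A T, True.

Definition is_pullback {C : Category} {A B Z P : C}
    (f : Hom A Z) (g : Hom B Z) (p1 : Hom P A) (p2 : Hom P B) : Prop :=
  f ∘ p1 = g ∘ p2 /\
  forall (Q : C) (q1 : Hom Q A) (q2 : Hom Q B), f ∘ q1 = g ∘ q2 ->
    exists! u : Hom Q P, p1 ∘ u = q1 /\ p2 ∘ u = q2.

Definition is_product {C : Category} {A B P : C}
    (p1 : Hom P A) (p2 : Hom P B) : Prop :=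
  forall (Q : C) (q1 : Hom Q A) (q2 : Hom Q B),
    exists! u : Hom Q P, p1 ∘ u = q1 /\ p2 ∘ u = q2.

Definition is_equalizer {C : Category} {A B E : C}
    (f g : Hom A B) (e : Hom E A) : Prop :=
  f ∘ e = g ∘ e /\
  forall (Q : C) (q : Hom Q A), f ∘ q = g ∘ q ->
    exists! u : Hom Q E, e ∘ u = q.

Definition finitely_complete (C : Category) : Prop :=
  (exists T : C, is_terminal T) /\
  forall (A B Z : C) (f : Hom A Z) (g : Hom B Z),
    exists (P : C) (p1 : Hom P A) (p2 : Hom P B), is_pullback f g p1 p2.

Definition jointly_extremally_epic {C : Category} {A B Z : C}
    (a : Hom A Z) (b : Hom B Z) : Prop :=
  forall (M : C) (m : Hom M Z) (a' : Hom A M) (b' : Hom B M),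
    mono m -> m ∘ a' = a -> m ∘ b' = b -> iso m.

Record PtOb (C : Category) := {
  pt_X : C;
  pt_Y : C;
  pt_f : Hom pt_X pt_Y;
  pt_s : Hom pt_Y pt_X;
  pt_fs : pt_f ∘ pt_s = idm pt_Y
}.

Record PtHom (C : Category) (A B : PtOb C) := {
  ph_x : Hom (pt_X A) (pt_X B);
  ph_y : Hom (pt_Y A) (pt_Y B);
  ph_f : pt_f B ∘ ph_x = ph_y ∘ pt_f A;
  ph_s : ph_x ∘ pt_s A = pt_s B ∘ ph_y
}.

Lemma PtHom_ext (C : Category) (A B : PtOb C) (u v : PtHom A B) :
  ph_x u = ph_x v -> ph_y u = ph_y v -> u = v.
Proof.
  destruct u as [ux uy uf us], v as [vx vy vf vs]; simpl; intros -> ->.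
  rewrite (proof_irrelevance _ uf vf), (proof_irrelevance _ us vs); reflexivity.
Qed.

Definition pt_id (C : Category) (A : PtOb C) : PtHom A A.
Proof.
  refine {| ph_x := idm (pt_X A); ph_y := idm (pt_Y A) |}.
  - now rewrite comp_id_l, comp_id_r.
  - now rewrite comp_id_l, comp_id_r.
Defined.

Definition pt_comp (C : Category) (A B D : PtOb C)
    (v : PtHom B D) (u : PtHom A B) : PtHom A D.
Proof.
  refine {| ph_x := ph_x v ∘ ph_x u; ph_y := ph_y v ∘ ph_y u |}.
  - rewrite comp_assoc, (ph_f v), <- comp_assoc, (ph_f u), comp_assoc.
    reflexivity.
  - rewrite <- comp_assoc, (ph_s u), comp_assoc, (ph_s v), <- comp_assoc.
    reflexivity.
Defined.

Definition Pt (C : Category) : Category.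
Proof.
  refine {| Ob := PtOb C; Hom := @PtHom C; idm := @pt_id C;
            comp := @pt_comp C |}.
  - intros; apply PtHom_ext; simpl; apply comp_assoc.
  - intros; apply PtHom_ext; simpl; apply comp_id_l.
  - intros; apply PtHom_ext; simpl; apply comp_id_r.
Defined.

(* A class Σ of split epimorphisms: a predicate on pairs (f, s), f : X -> Y,
   s : Y -> X, all of whose members satisfy f s = 1. *)
Definition SplitClass (C : Category) : Type :=
  forall X Y : C, Hom X Y -> Hom Y X -> Prop.

Definition in_class {C : Category} (Sig : SplitClass C) (A : PtOb C) : Prop :=
  Sig (pt_X A) (pt_Y A) (pt_f A) (pt_s A).

Definition fibrational {C : Category} (Sig : SplitClass C) : Prop :=
  (forall (X Y : C) (f : Hom X Y) (s : Hom Y X), Sig X Y f s -> f ∘ s = idm Y) /\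
  (forall (X Y : C) (f : Hom X Y) (s : Hom Y X),
      f ∘ s = idm Y -> iso f -> Sig X Y f s) /\
  (forall (X Y : C) (f : Hom X Y) (s : Hom Y X) (Y' : C) (y : Hom Y' Y)
          (X' : C) (f' : Hom X' Y') (x : Hom X' X) (s' : Hom Y' X'),
      Sig X Y f s -> is_pullback y f f' x ->
      f' ∘ s' = idm Y' -> x ∘ s' = s ∘ y -> Sig X' Y' f' s').

Definition closed_under_finite_limits_in_Pt {C : Category} (Sig : SplitClass C)
    : Prop :=
  (forall T : Pt C, is_terminal T -> in_class Sig T) /\
  (forall (A B P : Pt C) (p1 : Hom P A) (p2 : Hom P B),
      in_class Sig A -> in_class Sig B -> is_product p1 p2 -> in_class Sig P) /\
  (forall (A B E : Pt C) (f g : Hom A B) (e : Hom E A),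
      in_class Sig A -> in_class Sig B -> is_equalizer f g e -> in_class Sig E) /\
  (forall (A B Z P : Pt C) (f : Hom A Z) (g : Hom B Z)
          (p1 : Hom P A) (p2 : Hom P B),
      in_class Sig A -> in_class Sig B -> in_class Sig Z ->
      is_pullback f g p1 p2 -> in_class Sig P).

Definition point_congruous {C : Category} (Sig : SplitClass C) : Prop :=
  fibrational Sig /\ closed_under_finite_limits_in_Pt Sig.

Definition Sigma_Maltsev {C : Category} (Sig : SplitClass C) : Prop :=
  forall (X Y : C) (f : Hom X Y) (s : Hom Y X), Sig X Y f s ->
  forall (Y' : C) (g : Hom Y' Y) (t : Hom Y Y'), g ∘ t = idm Y ->
  forall (X' : C) (p1 : Hom X' Y') (p2 : Hom X' X), is_pullback g f p1 p2 ->
  forall (s' : Hom Y' X') (tb : Hom X X'),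
    p1 ∘ s' = idm Y' -> p2 ∘ s' = s ∘ g ->
    p1 ∘ tb = t ∘ f -> p2 ∘ tb = idm X ->
    jointly_extremally_epic s' tb.

Definition strongly_split {C : Category} {X Y : C} (f : Hom X Y) (s : Hom Y X)
    : Prop :=
  forall (Yb : C) (y : Hom Yb Y) (P : C) (p : Hom P Yb) (x : Hom P X),
    is_pullback y f p x -> jointly_extremally_epic x s.

Definition Sigma_protomodular {C : Category} (Sig : SplitClass C) : Prop :=
  forall (X Y : C) (f : Hom X Y) (s : Hom Y X), Sig X Y f s -> strongly_split f s.

(* morphism (X1, f1, s1) -> (X2, f2, s2) of Pt_Y(E) (hence of Σ_Y(E), a full
   subcategory): h with f2 h = f1 and h s1 = s2 *)
Definition fib_hom {C : Category} {Y X1 X2 : C}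
    (f1 : Hom X1 Y) (s1 : Hom Y X1) (f2 : Hom X2 Y) (s2 : Hom Y X2)
    (h : Hom X1 X2) : Prop :=
  f2 ∘ h = f1 /\ h ∘ s1 = s2.

Definition fib_iso {C : Category} {Y X1 X2 : C}
    (f1 : Hom X1 Y) (s1 : Hom Y X1) (f2 : Hom X2 Y) (s2 : Hom Y X2)
    (h : Hom X1 X2) : Prop :=
  fib_hom f1 s1 f2 s2 h /\
  exists k : Hom X2 X1, fib_hom f2 s2 f1 s1 k /\
    k ∘ h = idm X1 /\ h ∘ k = idm X2.

(* For every y : Y' -> Y the base-change functor y^* : Σ_Y(E) -> Σ_{Y'}(E)
   reflects isomorphisms.  y^* is described up to the choice of pullbacks:
   y^*(X1,f1,s1) = (P1, q1, t1) with P1 = Y' x_Y X1, t1 = (1, s1 y), and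
   y^*(h) = k the induced map P1 -> P2. *)
Definition base_change_conservative {C : Category} (Sig : SplitClass C) : Prop :=
  forall (Y' Y : C) (y : Hom Y' Y)
         (X1 : C) (f1 : Hom X1 Y) (s1 : Hom Y X1)
         (X2 : C) (f2 : Hom X2 Y) (s2 : Hom Y X2) (h : Hom X1 X2),
    Sig X1 Y f1 s1 -> Sig X2 Y f2 s2 -> fib_hom f1 s1 f2 s2 h ->
  forall (P1 : C) (q1 : Hom P1 Y') (x1 : Hom P1 X1) (t1 : Hom Y' P1),
    is_pullback y f1 q1 x1 -> q1 ∘ t1 = idm Y' -> x1 ∘ t1 = s1 ∘ y ->
  forall (P2 : C) (q2 : Hom P2 Y') (x2 : Hom P2 X2) (t2 : Hom Y' P2),
    is_pullback y f2 q2 x2 -> q2 ∘ t2 = idm Y' -> x2 ∘ t2 = s2 ∘ y ->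
  forall k : Hom P1 P2, q2 ∘ k = q1 -> x2 ∘ k = h ∘ x1 ->
    fib_iso q1 t1 q2 t2 k -> fib_iso f1 s1 f2 s2 h.

(* Part (1): the pullback of a Σ-point (f, s) along the split epimorphism g
   is again a Σ-point (p1, s'), and pulling it back further along the section
   t recovers X itself, with projection t̄.  So the strong splitness of
   (p1, s') is exactly the Mal'tsev condition for (s', t̄).

   Part (2): let h be a morphism of Σ-points over Y with y^*(h) invertible.
   The kernel pair R of h is a Σ-point over Y by point-congruity, and since
   y^*(h) is a monomorphism the two projections of R agree on y^*(R); hence
   both y^*(R) and the section of R factor through the diagonal X1 -> R,
   which is thus invertible by Σ-protomodularity, i.e. h is a monomorphism.
   Then the pullback projection of y^*(X2) and the section s2 both factor
   through h, and Σ-protomodularity again makes h invertible. *)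

Section Elementary.
Context {C : Category}.

Lemma pullback_hom_ext {A B Z P Q : C} (f : Hom A Z) (g : Hom B Z)
    (p1 : Hom P A) (p2 : Hom P B) (u v : Hom Q P) :
  is_pullback f g p1 p2 -> p1 ∘ u = p1 ∘ v -> p2 ∘ u = p2 ∘ v -> u = v.
Proof.
  intros [Hc Hu] E1 E2.
  destruct (Hu Q (p1 ∘ v) (p2 ∘ v)) as [w [_ Hw]].
  { rewrite !comp_assoc, Hc; reflexivity. }
  rewrite <- (Hw u (conj E1 E2)). apply Hw. split; reflexivity.
Qed.

Lemma jointly_extremally_epic_sym {A B Z : C} (a : Hom A Z) (b : Hom B Z) :
  jointly_extremally_epic a b -> jointly_extremally_epic b a.
Proof. intros H M m a' b' Hm E1 E2. eapply H; eauto. Qed.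

Lemma mono_of_retraction {A B : C} (m : Hom A B) (r : Hom B A) :
  r ∘ m = idm A -> mono m.
Proof.
  intros Hr Z u v E.
  rewrite <- (comp_id_l _ _ _ u), <- (comp_id_l _ _ _ v), <- Hr,
    <- !comp_assoc, E; reflexivity.
Qed.

Lemma fib_iso_of_iso {Y X1 X2 : C} (f1 : Hom X1 Y) (s1 : Hom Y X1)
    (f2 : Hom X2 Y) (s2 : Hom Y X2) (h : Hom X1 X2) :
  fib_hom f1 s1 f2 s2 h -> iso h -> fib_iso f1 s1 f2 s2 h.
Proof.
  intros [Hf Hs] [g [Hgh Hhg]].
  split; [split; assumption|].
  exists g. split; [split|split; assumption].
  - rewrite <- Hf, <- comp_assoc, Hhg, comp_id_r; reflexivity.
  - rewrite <- Hs, comp_assoc, Hgh, comp_id_l; reflexivity.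
Qed.

Lemma pullback_along_section {X Y Y' X' : C} {f : Hom X Y} {g : Hom Y' Y}
    {p1 : Hom X' Y'} {p2 : Hom X' X} {t : Hom Y Y'} {tb : Hom X X'} :
  is_pullback g f p1 p2 -> g ∘ t = idm Y ->
  p1 ∘ tb = t ∘ f -> p2 ∘ tb = idm X -> is_pullback t p1 f tb.
Proof.
  intros Hpb Hgt H1 H2.
  split; [symmetry; exact H1|].
  intros Q q1 q2 Eq.
  assert (Hfq : f ∘ (p2 ∘ q2) = q1).
  { rewrite comp_assoc, <- (proj1 Hpb), <- comp_assoc, <- Eq,
      comp_assoc, Hgt, comp_id_l; reflexivity. }
  exists (p2 ∘ q2). split; [split; [exact Hfq|]|].
  - apply (pullback_hom_ext g f p1 p2 _ _ Hpb).
    + rewrite comp_assoc, H1, <- comp_assoc, Hfq; exact Eq.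
    + rewrite comp_assoc, H2, comp_id_l; reflexivity.
  - intros u [_ Eu]. rewrite <- Eu, comp_assoc, H2, comp_id_l; reflexivity.
Qed.

End Elementary.

Section KernelPair.
Context {C : Category} {X1 X2 R : C} {h : Hom X1 X2} {r1 r2 : Hom R X1}
  {d : Hom X1 R}.
Hypotheses (HR : is_pullback h h r1 r2)
  (Hd1 : r1 ∘ d = idm X1) (Hd2 : r2 ∘ d = idm X1).

Lemma kernel_pair_diagonal_factor {W : C} (z : Hom W R) :
  r1 ∘ z = r2 ∘ z -> d ∘ (r1 ∘ z) = z.
Proof.
  intros Ez. apply (pullback_hom_ext h h r1 r2 _ _ HR).
  - rewrite comp_assoc, Hd1, comp_id_l; reflexivity.
  - rewrite comp_assoc, Hd2, comp_id_l; exact Ez.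
Qed.

Lemma mono_of_kernel_pair_diagonal_iso : iso d -> mono h.
Proof.
  intros [e [_ Hde]] Z a b E.
  destruct (proj2 HR Z a b E) as [v [[Hv1 Hv2] _]].
  assert (Hr : r1 = r2).
  { rewrite <- (comp_id_r _ _ _ r1), <- (comp_id_r _ _ _ r2), <- Hde,
      !comp_assoc, Hd1, Hd2; reflexivity. }
  rewrite <- Hv1, <- Hv2, Hr; reflexivity.
Qed.

End KernelPair.

Section FibrePullback.
Context {C : Category} {Y : C}.

Definition fib_pt {X : C} {f : Hom X Y} {s : Hom Y X} (H : f ∘ s = idm Y)
  : Pt C := Build_PtOb C X Y f s H.

Definition fib_pt_hom {X1 X2 : C} {f1 : Hom X1 Y} {s1 : Hom Y X1}
    {f2 : Hom X2 Y} {s2 : Hom Y X2}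
    (H1 : f1 ∘ s1 = idm Y) (H2 : f2 ∘ s2 = idm Y) {h : Hom X1 X2}
    (Hh : fib_hom f1 s1 f2 s2 h) : Hom (fib_pt H1) (fib_pt H2).
Proof.
  refine (Build_PtHom (fib_pt H1) (fib_pt H2) h (idm Y) _ _); simpl.
  - rewrite comp_id_l; exact (proj1 Hh).
  - rewrite comp_id_r; exact (proj2 Hh).
Defined.

Lemma fib_pullback_is_Pt_pullback {X1 X2 X3 P : C}
    {f1 : Hom X1 Y} {s1 : Hom Y X1} {f2 : Hom X2 Y} {s2 : Hom Y X2}
    {f3 : Hom X3 Y} {s3 : Hom Y X3} {fP : Hom P Y} {sP : Hom Y P}
    (H1 : f1 ∘ s1 = idm Y) (H2 : f2 ∘ s2 = idm Y) (H3 : f3 ∘ s3 = idm Y)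
    (HP : fP ∘ sP = idm Y)
    {u : Hom X1 X3} {v : Hom X2 X3} {p1 : Hom P X1} {p2 : Hom P X2}
    (Hu : fib_hom f1 s1 f3 s3 u) (Hv : fib_hom f2 s2 f3 s3 v)
    (Hp1 : fib_hom fP sP f1 s1 p1) (Hp2 : fib_hom fP sP f2 s2 p2) :
  is_pullback u v p1 p2 ->
  is_pullback (fib_pt_hom H1 H3 Hu) (fib_pt_hom H2 H3 Hv)
              (fib_pt_hom HP H1 Hp1) (fib_pt_hom HP H2 Hp2).
Proof.
  intros Hpb. split.
  { apply PtHom_ext; simpl; [exact (proj1 Hpb)|reflexivity]. }
  intros Q w1 w2 E.
  assert (Ex : u ∘ ph_x w1 = v ∘ ph_x w2) by exact (f_equal (@ph_x C Q _) E).
  assert (Ey : ph_y w1 = ph_y w2).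
  { pose proof (f_equal (@ph_y C Q _) E) as E'; simpl in E'.
    rewrite !comp_id_l in E'; exact E'. }
  destruct (proj2 Hpb _ _ _ Ex) as [w [[Hw1 Hw2] _]].
  assert (wf : fP ∘ w = ph_y w1 ∘ pt_f Q).
  { rewrite <- (proj1 Hp1), <- comp_assoc, Hw1; exact (ph_f w1). }
  assert (ws : w ∘ pt_s Q = sP ∘ ph_y w1).
  { apply (pullback_hom_ext u v p1 p2 _ _ Hpb).
    - rewrite !comp_assoc, Hw1, (proj2 Hp1); exact (ph_s w1).
    - rewrite !comp_assoc, Hw2, (proj2 Hp2), Ey; exact (ph_s w2). }
  exists (Build_PtHom Q (fib_pt HP) w (ph_y w1) wf ws).
  split.
  - split; apply PtHom_ext; simpl; rewrite ?comp_id_l; auto.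
  - intros w' [F1 F2].
    pose proof (f_equal (@ph_x C Q _) F1) as G1.
    pose proof (f_equal (@ph_x C Q _) F2) as G2.
    pose proof (f_equal (@ph_y C Q _) F1) as G3.
    simpl in G1, G2, G3; rewrite comp_id_l in G3.
    apply PtHom_ext; simpl; [|symmetry; exact G3].
    apply (pullback_hom_ext u v p1 p2 _ _ Hpb); [rewrite Hw1|rewrite Hw2]; auto.
Qed.

End FibrePullback.

Lemma kernel_pair_proj_eq_of_base_change_mono {C : Category}
    {Y' Y X1 X2 R P1 P2 W : C} {y : Hom Y' Y} {f1 : Hom X1 Y} {f2 : Hom X2 Y}
    {h : Hom X1 X2} {r1 r2 : Hom R X1}
    {q1 : Hom P1 Y'} {x1 : Hom P1 X1} {q2 : Hom P2 Y'} {x2 : Hom P2 X2}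
    {k : Hom P1 P2} {q : Hom W Y'} {z : Hom W R} :
  f2 ∘ h = f1 -> is_pullback h h r1 r2 ->
  is_pullback y f1 q1 x1 -> is_pullback y f2 q2 x2 ->
  q2 ∘ k = q1 -> x2 ∘ k = h ∘ x1 -> mono k ->
  y ∘ q = f1 ∘ (r1 ∘ z) -> r1 ∘ z = r2 ∘ z.
Proof.
  intros Hf HR Hp1 Hp2 Hk1 Hk2 Hk Eq.
  assert (Eq' : y ∘ q = f1 ∘ (r2 ∘ z)).
  { rewrite Eq, <- Hf, !comp_assoc, <- (comp_assoc _ _ _ _ _ f2 h r1), (proj1 HR),
    comp_assoc; reflexivity. }
  destruct (proj2 Hp1 _ _ _ Eq) as [m1 [[Hm1 Hm1'] _]].
  destruct (proj2 Hp1 _ _ _ Eq') as [m2 [[Hm2 Hm2'] _]].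
  assert (Em : m1 = m2).
  { apply Hk, (pullback_hom_ext y f2 q2 x2 _ _ Hp2).
    - rewrite !comp_assoc, Hk1, Hm1, Hm2; reflexivity.
    - rewrite !comp_assoc, Hk2, <- !comp_assoc, Hm1', Hm2', !comp_assoc,
        (proj1 HR); reflexivity. }
  rewrite <- Hm1', <- Hm2', Em; reflexivity.
Qed.

Section BaseChange.
Context {C : Category} (Sig : SplitClass C).
Hypotheses (Hpbex : forall (A B Z : C) (f : Hom A Z) (g : Hom B Z),
              exists (P : C) (p1 : Hom P A) (p2 : Hom P B), is_pullback f g p1 p2)
  (Hpm : Sigma_protomodular Sig) (Hpc : point_congruous Sig).

Lemma kernel_pair_in_class {Y X1 X2 R : C} {f1 : Hom X1 Y} {s1 : Hom Y X1}
    {f2 : Hom X2 Y} {s2 : Hom Y X2} {h : Hom X1 X2}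
    {r1 r2 : Hom R X1} {sR : Hom Y R} :
  Sig X1 Y f1 s1 -> Sig X2 Y f2 s2 -> fib_hom f1 s1 f2 s2 h ->
  is_pullback h h r1 r2 -> r1 ∘ sR = s1 -> r2 ∘ sR = s1 ->
  Sig R Y (f1 ∘ r1) sR.
Proof.
  destruct Hpc as [[Hsplit _] [_ [_ [_ Hclos]]]].
  intros HS1 HS2 Hh HR HsR1 HsR2.
  assert (H1 : f1 ∘ s1 = idm Y) by (apply Hsplit; exact HS1).
  assert (H2 : f2 ∘ s2 = idm Y) by (apply Hsplit; exact HS2).
  assert (HP : (f1 ∘ r1) ∘ sR = idm Y) by (rewrite <- comp_assoc, HsR1; exact H1).
  assert (Hr1 : fib_hom (f1 ∘ r1) sR f1 s1 r1) by (split; [reflexivity|exact HsR1]).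
  assert (Hr2 : fib_hom (f1 ∘ r1) sR f1 s1 r2).
  { split; [|exact HsR2].
    rewrite <- (proj1 Hh), <- !comp_assoc, (proj1 HR); reflexivity. }
  exact (Hclos (fib_pt H1) (fib_pt H1) (fib_pt H2) (fib_pt HP) _ _ _ _ HS1 HS1 HS2
           (fib_pullback_is_Pt_pullback H1 H1 H2 HP Hh Hh Hr1 Hr2 HR)).
Qed.

Lemma mono_of_base_change_mono {Y' Y X1 X2 P1 P2 : C} (y : Hom Y' Y)
    {f1 : Hom X1 Y} {s1 : Hom Y X1} {f2 : Hom X2 Y} {s2 : Hom Y X2}
    {h : Hom X1 X2} {q1 : Hom P1 Y'} {x1 : Hom P1 X1}
    {q2 : Hom P2 Y'} {x2 : Hom P2 X2} {k : Hom P1 P2} :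
  Sig X1 Y f1 s1 -> Sig X2 Y f2 s2 -> fib_hom f1 s1 f2 s2 h ->
  is_pullback y f1 q1 x1 -> is_pullback y f2 q2 x2 ->
  q2 ∘ k = q1 -> x2 ∘ k = h ∘ x1 -> mono k -> mono h.
Proof.
  intros HS1 HS2 Hh Hp1 Hp2 Hk1 Hk2 Hk.
  destruct (Hpbex _ _ _ h h) as [R [r1 [r2 HR]]].
  destruct (proj2 HR Y s1 s1 eq_refl) as [sR [[HsR1 HsR2] _]].
  destruct (proj2 HR X1 (idm X1) (idm X1) eq_refl) as [d [[Hd1 Hd2] _]].
  pose proof (kernel_pair_in_class HS1 HS2 Hh HR HsR1 HsR2) as HSR.
  destruct (Hpbex _ _ _ y (f1 ∘ r1)) as [PR [qR [xR HPR]]].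
  assert (HxR : d ∘ (r1 ∘ xR) = xR).
  { apply (kernel_pair_diagonal_factor HR Hd1 Hd2),
      (kernel_pair_proj_eq_of_base_change_mono (q := qR)
        (proj1 Hh) HR Hp1 Hp2 Hk1 Hk2 Hk).
    rewrite comp_assoc; exact (proj1 HPR). }
  assert (HsRd : d ∘ s1 = sR).
  { rewrite <- HsR1; apply (kernel_pair_diagonal_factor HR Hd1 Hd2).
    rewrite HsR1, HsR2; reflexivity. }
  apply (mono_of_kernel_pair_diagonal_iso HR Hd1 Hd2).
  exact (Hpm _ _ _ _ HSR _ y _ qR xR HPR _ d _ _
           (mono_of_retraction d r1 Hd1) HxR HsRd).
Qed.

End BaseChange.

Lemma Sigma_Maltsev_of_protomodular {C : Category} (Sig : SplitClass C) :
  fibrational Sig -> Sigma_protomodular Sig -> Sigma_Maltsev Sig.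
Proof.
  intros [_ [_ Hstab]] Hpm X Y f s Hs Y' g t Hgt X' p1 p2 Hpb s' tb H1 H2 H3 H4.
  assert (HS' : Sig X' Y' p1 s') by (eapply Hstab; eauto).
  apply jointly_extremally_epic_sym.
  exact (Hpm _ _ _ _ HS' _ t _ f tb (pullback_along_section Hpb Hgt H3 H4)).
Qed.

Lemma base_change_conservative_of_protomodular {C : Category}
    (Sig : SplitClass C) :
  finitely_complete C -> Sigma_protomodular Sig -> point_congruous Sig ->
  base_change_conservative Sig.
Proof.
  intros [_ Hpbex] Hpm Hpc Y' Y y X1 f1 s1 X2 f2 s2 h HS1 HS2 Hh
    P1 q1 x1 t1 Hp1 _ _ P2 q2 x2 t2 Hp2 _ _ k Hk1 Hk2 [_ [ki [_ [Hki Hkki]]]].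
  assert (Hmono : mono h).
  { exact (mono_of_base_change_mono Sig Hpbex Hpm Hpc y HS1 HS2 Hh Hp1 Hp2 Hk1 Hk2
             (mono_of_retraction k ki Hki)). }
  assert (Hx2 : h ∘ (x1 ∘ ki) = x2).
  { rewrite comp_assoc, <- Hk2, <- comp_assoc, Hkki, comp_id_r; reflexivity. }
  apply fib_iso_of_iso; [exact Hh|].
  exact (Hpm _ _ _ _ HS2 _ y _ q2 x2 Hp2 _ h _ _ Hmono Hx2 (proj2 Hh)).
Qed.

Theorem theorem8p4 (C : Category) (Sig : SplitClass C) :
  finitely_complete C -> fibrational Sig ->
  (Sigma_protomodular Sig -> Sigma_Maltsev Sig) /\
  (Sigma_protomodular Sig -> point_congruous Sig -> base_change_conservative Sig).
Proof.
  intros Hfc Hfib. split.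
  - exact (Sigma_Maltsev_of_protomodular Sig Hfib).
  - exact (base_change_conservative_of_protomodular Sig Hfc).
Qed.
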